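(* For every connected conjunctive query $q$, $\mathbf E[|q(I)|]=n^{1+\chi(q)}$, where the expectation is over a uniformly chosen matching database $I$ over $[n]$.
   Context: A (full, self-join-free) conjunctive query $q(x_1,\ldots,x_k)=S_1(\bar x_1),\ldots,S_\ell(\bar x_\ell)$ has $k$ distinct variables and $\ell$ atoms over distinct relation symbols, $S_j$ of arity $a_j$; $q(I)$ is the set of $\mathbf a\in[n]^k$ such that the projection of $\mathbf a$ onto each atom lies in $S_j$. It is connected if its hypergraph (variables as vertices, hyperedge $\mathrm{vars}(S_j)$ per atom) is connected. $\chi(q)=k+\ell-\sum_ja_j-c$, with $c$ the number of connected components. A matching database over $[n]$: each $S_j$ has exactly $n$ tuples and each of its columns contains each value of $[n]$ exactly once; uniformly chosen means each $S_j$ independently uniform among these. *)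

From mathcomp Require Import all_boot all_order all_algebra.
Set Implicit Arguments. Unset Strict Implicit. Unset Printing Implicit Defensive.
Import Order.TTheory GRing.Theory Num.Theory.

(* A full self-join-free conjunctive query with k variables 'I_k and
   l atoms indexed by 'I_l; atom j has arity [a j] and its argument list is
   [x j : 'I_(a j) -> 'I_k] (variables may repeat inside an atom).
   Distinct indices j = distinct relation symbols (self-join-free). *)

Definition atom_vars (k l : nat) (a : 'I_l -> nat)
  (x : forall j : 'I_l, 'I_(a j) -> 'I_k) (j : 'I_l) : {set 'I_k} :=
  [set x j p | p : 'I_(a j)].

Definition qadj (k l : nat) (a : 'I_l -> nat)
  (x : forall j : 'I_l, 'I_(a j) -> 'I_k) : rel 'I_k :=
  fun u w => [exists j : 'I_l, (u \in atom_vars x j) && (w \in atom_vars x j)].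

Definition ncomp (k l : nat) (a : 'I_l -> nat)
  (x : forall j : 'I_l, 'I_(a j) -> 'I_k) : nat :=
  n_comp (qadj x) predT.

Definition qconnected (k l : nat) (a : 'I_l -> nat)
  (x : forall j : 'I_l, 'I_(a j) -> 'I_k) : bool :=
  (0 < k) && [forall u, forall w, connect (qadj x) u w].

Definition chi (k l : nat) (a : 'I_l -> nat)
  (x : forall j : 'I_l, 'I_(a j) -> 'I_k) : int :=
  (k%:Z + l%:Z - (\sum_(j < l) a j)%:Z - (ncomp x)%:Z)%R.

Definition relation (n m : nat) := {set {ffun 'I_m -> 'I_n}}.

Definition matching (n m : nat) (S : relation n m) : bool :=
  (#|S| == n) &&
  [forall c : 'I_m, forall v : 'I_n, #|[set t in S | t c == v]| == 1].

Definition database (n l : nat) (a : 'I_l -> nat) :=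
  {dffun forall j : 'I_l, relation n (a j)}.

Definition matching_db (n l : nat) (a : 'I_l -> nat) (I : database n a) : bool :=
  [forall j, matching (I j)].

Definition answers (n k l : nat) (a : 'I_l -> nat)
  (x : forall j : 'I_l, 'I_(a j) -> 'I_k) (I : database n a)
  : {set {ffun 'I_k -> 'I_n}} :=
  [set v : {ffun 'I_k -> 'I_n} |
     [forall j : 'I_l, [ffun p : 'I_(a j) => v (x j p)] \in I j]].

(* E[|q(I)|] for I uniform among matching databases (each relation independently
   uniform among matching relations = uniform over the product) *)
Definition expected_answers (n k l : nat) (a : 'I_l -> nat)
  (x : forall j : 'I_l, 'I_(a j) -> 'I_k) : rat :=
  ((\sum_(I : database n a | matching_db I) (#|answers x I|)%:R)
     / (#|[set I : database n a | matching_db I]|)%:R)%R.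

From mathcomp Require Import all_boot all_order all_algebra all_fingroup.
From mathcomp Require Import zify.
Import Order.TTheory GRing.Theory Num.Theory.

(* Transposing the values t c and t' c in every column c permutes the tuples,
   preserves matchings and sends t' to t, so every tuple lies in the same
   number of matchings of a given arity m.  A matching contains n of the n^m
   tuples, hence each tuple lies in a fraction n^(1-m) of them.  The relations
   of a database are independent, so each of the n^k assignments is an answer
   for a fraction n^(sum_j (1 - a_j)) of the matching databases, and
   E|q(I)| = n^(k + l - sum_j a_j), which is n^(1 + chi q) as c = 1. *)


Section MatchingRelations.
Variables n m : nat.
Implicit Types (t u : {ffun 'I_m -> 'I_n}) (S : relation n m).

Definition colswap t t' u : {ffun 'I_m -> 'I_n} :=
  [ffun c => tperm (t c) (t' c) (u c)].

Lemma colswapK t t' : involutive (colswap t t').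
Proof. by move=> u; apply/ffunP=> c; rewrite !ffunE tpermK. Qed.

Lemma colswap_inj t t' : injective (colswap t t').
Proof. exact: inv_inj (colswapK t t'). Qed.

Lemma colswapR t t' : colswap t t' t' = t.
Proof. by apply/ffunP=> c; rewrite ffunE tpermR. Qed.

Lemma matching_colswap t t' S : matching S -> matching (colswap t t' @^-1: S).
Proof.
case/andP=> /eqP cardS /forallP columnS; apply/andP; split.
  by rewrite card_preimset ?cardS //; apply: colswap_inj.
apply/forallP=> c; apply/forallP=> v.
have -> : [set u in colswap t t' @^-1: S | u c == v] =
          colswap t t' @^-1: [set u in S | u c == tperm (t c) (t' c) v].
  by apply/setP=> u; rewrite !inE ffunE (inj_eq perm_inj).
by rewrite card_preimset; [exact: forallP (columnS c) _|apply: colswap_inj].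
Qed.

Definition matchings := [set S : relation n m | matching S].

Definition matchings_with t := [set S in matchings | t \in S].

Lemma card_matchings_with_le t t' :
  #|matchings_with t| <= #|matchings_with t'|.
Proof.
pose F S : relation n m := colswap t t' @^-1: S.
have FK : involutive F by move=> S; apply/setP=> u; rewrite !inE colswapK.
rewrite -(card_imset _ (inv_inj FK)); apply/subset_leq_card/subsetP=> S'.
case/imsetP=> S; rewrite !inE => /andP[mS tS] ->.
by rewrite matching_colswap //= inE colswapR.
Qed.

Lemma card_matchings_with_eq t t' :
  #|matchings_with t| = #|matchings_with t'|.
Proof. by apply/eqP; rewrite eqn_leq !card_matchings_with_le. Qed.

Lemma sum_card_matchings_with :
  \sum_t #|matchings_with t| = #|matchings| * n.
Proof.
under eq_bigr do rewrite -sum1_card big_mkcond /=.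
rewrite exchange_big -sum_nat_const [RHS]big_mkcond /=; apply: eq_bigr => S _.
rewrite inE; case mS: (matching S); last first.
  by rewrite big1 // => t _; rewrite !inE mS.
case/andP: (mS) => /eqP cardS _.
rewrite -[RHS]cardS -sum1_card [RHS]big_mkcond /=.
by apply: eq_bigr => t _; rewrite !inE mS.
Qed.

Lemma card_matchings_with t : 0 < n -> 0 < m ->
  #|matchings_with t| * n ^ m.-1 = #|matchings|.
Proof.
move=> n_gt0 m_gt0; apply/eqP; rewrite -(eqn_pmul2r n_gt0).
rewrite -sum_card_matchings_with.
under eq_bigr do rewrite (card_matchings_with_eq _ t).
by rewrite sum_nat_const card_ffun !card_ord -mulnA -expnSr prednK // mulnC.
Qed.

Lemma matchings_gt0 : 0 < m -> 0 < #|matchings|.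
Proof.
move=> m_gt0; pose c0 : 'I_m := Ordinal m_gt0.
pose diag : relation n m := [set [ffun=> i] | i : 'I_n].
have diag_inj : injective (fun i : 'I_n => [ffun=> i] : {ffun 'I_m -> 'I_n}).
  by move=> i j /(congr1 (fun f : {ffun 'I_m -> 'I_n} => f c0)); rewrite !ffunE.
apply/card_gt0P; exists diag; rewrite inE; apply/andP; split.
  by rewrite card_imset ?card_ord.
apply/forallP=> c; apply/forallP=> v.
rewrite -(cards1 ([ffun=> v] : {ffun 'I_m -> 'I_n})); apply/eqP/eq_card=> t.
rewrite !inE; apply/andP/eqP=> [[/imsetP[i _ ->]]|->].
  by rewrite ffunE => /eqP->.
by split; [apply: imset_f|rewrite ffunE].
Qed.

End MatchingRelations.

Arguments matchings_with {n m} t.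

Section RandomMatchingDatabase.
Variables (n k l : nat) (a : 'I_l -> nat).
Variable x : forall j : 'I_l, 'I_(a j) -> 'I_k.

Definition atom_tuple (v : {ffun 'I_k -> 'I_n}) (j : 'I_l) :
  {ffun 'I_(a j) -> 'I_n} := [ffun p => v (x j p)].

Lemma card_matching_dbs :
  #|[set I : database n a | matching_db I]| = \prod_j #|matchings n (a j)|.
Proof.
rewrite -cardsXn; apply: eq_card => I; rewrite !inE.
by apply: eq_forallb => j; rewrite inE.
Qed.

Lemma sum_card_answers :
  \sum_(I : database n a | matching_db I) #|answers x I| =
  \sum_v \prod_j #|matchings_with (atom_tuple v j)|.
Proof.
under [LHS]eq_bigr do rewrite -sum1_card big_mkcond /=.
rewrite exchange_big; apply: eq_bigr => v _.
rewrite -big_mkcondr sum1dep_card -cardsXn; apply: eq_card => I.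
rewrite !inE; apply/andP/forallP => [[/forallP mI /forallP vI] j|mvI].
  by rewrite !inE mI vI.
by split; apply/forallP => j; have := mvI j; rewrite !inE => /andP[].
Qed.

Lemma sum_card_answers_mul : 0 < n -> (forall j, 0 < a j) ->
  (\sum_(I : database n a | matching_db I) #|answers x I|) * n ^ (\sum_j (a j).-1)
  = n ^ k * #|[set I : database n a | matching_db I]|.
Proof.
move=> n_gt0 a_gt0.
rewrite sum_card_answers card_matching_dbs expn_sum big_distrl /=.
have -> : n ^ k = #|{ffun 'I_k -> 'I_n}| by rewrite card_ffun !card_ord.
rewrite -sum_nat_const; apply: eq_bigr => v _.
by rewrite -big_split; apply: eq_bigr => j _; apply: card_matchings_with.
Qed.

Lemma connect_sym_qadj : connect_sym (qadj x).
Proof.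
apply: sym_connect_sym => u w.
by apply/existsP/existsP=> -[j]; rewrite andbC; exists j.
Qed.

Lemma ncomp_connected : qconnected x -> ncomp x = 1.
Proof.
case/andP=> k_gt0 /forallP linked; pose u0 : 'I_k := Ordinal k_gt0.
rewrite /ncomp (@eq_n_comp_r _ _ _ (connect (qadj x) u0)).
  exact: n_comp_connect connect_sym_qadj u0.
by move=> u; rewrite !inE; apply/esym/(forallP (linked u0)).
Qed.

Lemma chi_connected : qconnected x -> (forall j, 0 < a j) ->
  (1 + chi x = k%:Z - (\sum_j (a j).-1)%:Z)%R.
Proof.
move=> qc a_gt0; rewrite /chi ncomp_connected //.
have -> : \sum_j a j = \sum_j (a j).-1 + l.
  rewrite -[l in _ + l]card_ord -sum1_card -big_split /=.
  by apply: eq_bigr => j _; rewrite addn1 prednK.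
lia.
Qed.

End RandomMatchingDatabase.

Local Open Scope ring_scope.

Theorem lemma2 (n k l : nat) (a : 'I_l -> nat)
  (x : forall j : 'I_l, 'I_(a j) -> 'I_k) :
  (0 < n)%N -> (forall j, 0 < a j)%N -> qconnected x ->
  expected_answers n x = (n%:R : rat) ^ (1 + chi x).
Proof.
move=> n_gt0 a_gt0 qc.
have n_neq0 : (n%:R : rat) != 0 by rewrite pnatr_eq0 -lt0n.
have dbs_neq0 : (#|[set I : database n a | matching_db I]|%:R : rat) != 0.
  rewrite pnatr_eq0 -lt0n card_matching_dbs prodn_gt0 // => j.
  exact: matchings_gt0.
rewrite /expected_answers -natr_sum chi_connected // expfzDr // -exprnN.
rewrite -exprnP; apply/eqP; rewrite eqr_div ?expf_neq0 //.
by rewrite -!natrX -!natrM sum_card_answers_mul.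
Qed.
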